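(* Let $N\ge 2$, $p>1$, $0<r_0<R_0\le\infty$, $\Omega=B]r_0,R_0[$, and $V\in C(\Omega)$. Let $u$ be a positive radial strictly monotone $C^2$-subsolution and $v$ a positive radial strictly monotone $C^2$-supersolution of $-\Delta_p w-V|w|^{p-2}w=0$ in $\Omega$, and assume that either $u$ is a strict subsolution or $v$ is a strict supersolution. If $(u/v)'(\rho)=0$ for some $\rho\in\,]r_0,R_0[$, then $(u/v)''(\rho)>0$. In particular, $u/v$ cannot have a local maximum in $B]r_0,R_0[$.
   Context: $\Delta_p w=\nabla\cdot(|\nabla w|^{p-2}\nabla w)$. $B]r_0,R_0[=\{x\in\mathbb{R}^N: r_0<|x|<R_0\}$, $B[r_0,R_0[=\{x: r_0\le|x|<R_0\}$. A $C^2$-subsolution (resp. supersolution) in $\Omega$ is $w\in C^2(B[r_0,R_0[)$ with $-\Delta_p w-V|w|^{p-2}w\le 0$ (resp. $\ge0$) pointwise in $\Omega$; strict means $<0$ (resp. $>0$) at every point of $\Omega$. Radial functions $w(x)=\phi(|x|)$ are identified with $\phi$ and derivatives $'$ are with respect to $r=|x|$; strictly monotone means $w'(r)>0$ for all $r\in[r_0,R_0[$ or $w'(r)<0$ for all $r\in[r_0,R_0[$. *)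

From HB Require Import structures.
From mathcomp Require Import all_boot all_order all_algebra.
From mathcomp Require Import all_classical all_reals all_analysis.
Set Implicit Arguments. Unset Strict Implicit. Unset Printing Implicit Defensive.
Import Order.TTheory GRing.Theory Num.Theory.
Import numFieldNormedType.Exports.
Local Open Scope classical_set_scope.
Local Open Scope ring_scope.

Section PLap.
Variables (R : realType) (N : nat).
Notation pt := 'rV[R]_N.

Definition enorm (x : pt) : R := Num.sqrt (\sum_(i < N) x ord0 i ^+ 2).

Definition evec (i : 'I_N) : pt := delta_mx ord0 i.
Definition partial (i : 'I_N) (f : pt -> R) (x : pt) : R := 'D_(evec i) f x.

Definition gradnorm (w : pt -> R) (x : pt) : R :=
  Num.sqrt (\sum_(i < N) partial i w x ^+ 2).

Definition plap (p : R) (w : pt -> R) (x : pt) : R :=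
  \sum_(i < N) partial i (fun y => (gradnorm w y) `^ (p - 2) * partial i w y) x.

Definition Lop (p : R) (V : pt -> R) (w : pt -> R) (x : pt) : R :=
  - plap p w x - V x * (`|w x| `^ (p - 2)) * w x.

(* B]r0,R0[  and  B[r0,R0[  (R0 may be +oo) *)
Definition annulus_open (r0 : R) (R0 : \bar R) : set pt :=
  [set x | r0 < enorm x /\ ((enorm x)%:E < R0)%E].
Definition annulus (r0 : R) (R0 : \bar R) : set pt :=
  [set x | r0 <= enorm x /\ ((enorm x)%:E < R0)%E].

(* w in C^2(A), A = B[r0,R0[ with interior O = B]r0,R0[ :
   w is twice differentiable in O, and w, its first and second partial
   derivatives extend continuously to A. *)
Definition C2_on (O A : set pt) (w : pt -> R) : Prop :=
  (forall x, O x -> differentiable w x /\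
                    forall i, differentiable (partial i w) x) /\
  exists (g : 'I_N -> pt -> R) (h : 'I_N -> 'I_N -> pt -> R),
    {within A, continuous w} /\
    (forall i, {within A, continuous g i}) /\
    (forall i j, {within A, continuous h i j}) /\
    (forall x, O x -> (forall i, partial i w x = g i x) /\
                      (forall i j, partial j (partial i w) x = h i j x)).

Definition radial_on (A : set pt) (w : pt -> R) (phi : R -> R) : Prop :=
  forall x, A x -> w x = phi (enorm x).

Definition positive_on (A : set pt) (w : pt -> R) : Prop :=
  forall x, A x -> 0 < w x.

Definition subsolution (p : R) (V : pt -> R) (O : set pt) (w : pt -> R) :=
  forall x, O x -> Lop p V w x <= 0.
Definition strict_subsolution (p : R) (V : pt -> R) (O : set pt) (w : pt -> R) :=
  forall x, O x -> Lop p V w x < 0.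
Definition supersolution (p : R) (V : pt -> R) (O : set pt) (w : pt -> R) :=
  forall x, O x -> 0 <= Lop p V w x.
Definition strict_supersolution (p : R) (V : pt -> R) (O : set pt) (w : pt -> R) :=
  forall x, O x -> 0 < Lop p V w x.

End PLap.

Definition rderiv_at (R : realType) (phi : R -> R) (r l : R) : Prop :=
  (fun h : R => h^-1 * (phi (r + h) - phi r)) @ 0^'+ --> l.

Definition strictly_monotone_radial (R : realType) (r0 : R) (R0 : \bar R)
    (phi : R -> R) : Prop :=
  ((forall r, r0 < r -> (r%:E < R0)%E -> 0 < derive1 phi r) /\
     exists l, rderiv_at phi r0 l /\ 0 < l)
  \/
  ((forall r, r0 < r -> (r%:E < R0)%E -> derive1 phi r < 0) /\
     exists l, rderiv_at phi r0 l /\ l < 0).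

(** Along the first coordinate axis a radial function [w = phi (|x|)] satisfies
    [-Delta_p w - V w^(p-1) = -(p-1) |phi'|^(p-2) phi'' - (N-1)/r |phi'|^(p-2) phi' - V phi^(p-1)].
    At a critical point [rho] of [phi_u / phi_v] the logarithmic derivatives agree,
    [phi_u' = k phi_u] and [phi_v' = k phi_v], with [k <> 0] by strict monotonicity.
    After factoring out [|k|^(p-2) phi^(p-2) > 0] the first-order and potential terms
    of the two radial inequalities coincide, and subtracting them leaves
    [(p-1) |k|^(p-2) (phi_v phi_u'' - phi_u phi_v'') > 0], i.e. [(phi_u/phi_v)''(rho) > 0].
    A local maximum of [u/v] at [x] is, along the ray through [x], a local maximum of
    [phi_u / phi_v] at [|x|], where the second derivative would be [<= 0]. *)

From HB Require Import structures.
From mathcomp Require Import all_boot all_order all_algebra.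
From mathcomp Require Import all_classical all_reals all_analysis.
From mathcomp Require Import ring lra.
Import Order.TTheory GRing.Theory Num.Theory.
Import numFieldNormedType.Exports.
Local Open Scope classical_set_scope.
Local Open Scope ring_scope.
Set Implicit Arguments. Unset Strict Implicit. Unset Printing Implicit Defensive.

Section LineDerivative.
Variables (R : realType) (V : normedModType R).

Lemma is_derive_lineP (f : V -> R) (y v : V) (t df : R) :
  is_derive t 1 (fun s => f (s *: v + y)) df <-> is_derive (t *: v + y) v f df.
Proof.
have E : (fun h : R => h^-1 *: (((fun s => f (s *: v + y)) \o shift t) (h *: 1)
                                 - f (t *: v + y)))
       = (fun h => h^-1 *: ((f \o shift (t *: v + y)) (h *: v) - f (t *: v + y))).
  by apply/funext => h /=; rewrite [h%:A]mulr1 scalerDl addrA.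
by split=> -[]; rewrite /derivable /derive ?E -?E => H1 H2; split;
  rewrite /derivable /derive ?E -?E.
Qed.

Lemma is_derive_rayP (f : V -> R) (v : V) (t df : R) :
  is_derive t 1 (fun s => f (s *: v)) df <-> is_derive (t *: v) v f df.
Proof.
have -> : (fun s => f (s *: v)) = (fun s => f (s *: v + 0)).
  by apply/funext => s; rewrite addr0.
by rewrite is_derive_lineP addr0.
Qed.

End LineDerivative.

Section RealFunctions.
Variable R : realType.

Lemma is_derive_id_mul (H : R -> R) :
  H @ (0 : R) --> H 0 -> is_derive (0 : R) 1 (fun s => s * H s) (H 0).
Proof.
move=> HC.
set q := fun h : R => h^-1 *: (((fun s => s * H s) \o shift 0) (h *: 1) - 0 * H 0).
have qE : {near (0 : R)^', H =1 q}.
  near=> h; have h0 : h != 0 by near: h; exact: nbhs_dnbhs_neq.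
  by rewrite /q /= [h%:A]mulr1 addr0 mul0r subr0 /GRing.scale /= mulKf.
have qC : q @ (0 : R)^' --> H 0.
  apply: cvg_trans (near_eq_cvg qE) _; exact: cvg_trans (cvg_app H (cvg_within _)) HC.
split; first by apply/cvg_ex; exists (H 0).
exact: cvg_lim.
Unshelve. all: by end_near. Qed.

Definition ppow (p s : R) : R := `|s| `^ (p - 2) * s.

Lemma ppow_pos (p s : R) : 0 < s -> ppow p s = s `^ (p - 1).
Proof.
move=> s0; rewrite /ppow gtr0_norm // -{2}(powRr1 (ltW s0)) -powRD.
  by congr (_ `^ _); ring.
by apply/implyP => _; rewrite gt_eqF.
Qed.

Lemma ppowN (p s : R) : ppow p (- s) = - ppow p s.
Proof. by rewrite /ppow normrN mulrN. Qed.

Lemma ppowM (p k a : R) : 0 <= a -> ppow p (k * a) = ppow p k * a `^ (p - 2) * a.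
Proof.
by move=> a0; rewrite /ppow normrM (ger0_norm a0) powRM //; ring.
Qed.

Lemma is_derive_ppow (p s : R) : s != 0 ->
  is_derive s 1 (ppow p) ((p - 1) * `|s| `^ (p - 2)).
Proof.
have Ep : p - 1 - 1 = p - 2 by ring.
move=> sn0; wlog s0 : s sn0 / 0 < s => [Hpos|].
  have [sneg|spos|/eqP] := ltgtP s 0; [|exact: Hpos|by rewrite (negbTE sn0)].
  have := is_deriveN (is_derive1_comp (Hpos (- s) _ _) (is_deriveN (is_derive_id s 1))).
  rewrite normrN oppr_gt0 oppr_eq0 => /(_ sn0 sneg) D.
  apply: near_eq_is_derive (is_derive_eq D _); last by rewrite mulrN1 opprK.
  by near=> t; rewrite -[RHS]opprK -ppowN.
apply: near_eq_is_derive (is_derive_eq (is_derive1_powR (p - 1) s0) _).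
  by near=> t; rewrite ppow_pos //; near: t; exact: lt_nbhsr.
by rewrite Ep gtr0_norm.
Unshelve. all: by end_near. Qed.

End RealFunctions.

Section SecondDerivativeTest.
Variable R : realType.
Implicit Types (f : R -> R) (c : R).

Lemma derive1_eq0_at_local_max f c :
  (\forall t \near c, derivable f t 1) -> (\forall t \near c, f t <= f c) ->
  derive1 f c = 0.
Proof.
move=> fD fmax; have : \forall t \near c, derivable f t 1 /\ f t <= f c.
  by near=> t; split; near: t.
move=> /nbhs_ballP[e /= e0 He].
have inball t : t \in `]c - e, c + e[ -> ball c e t.
  by rewrite in_itv /= /ball /= ltr_distlC.
suff [_ <-] : is_derive c 1 f 0 by rewrite derive1E.
apply: (@derive1_at_max _ f (c - e) (c + e)).
- by lra.
- by move=> t /inball /He [].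
- by rewrite in_itv /=; apply/andP; split; lra.
- by move=> t /inball /He [].
Unshelve. all: by end_near. Qed.

Lemma derive2_le0_at_local_max f c :
  (\forall t \near c, derivable f t 1) -> derivable (derive1 f) c 1 ->
  (\forall t \near c, f t <= f c) -> derive1 (derive1 f) c <= 0.
Proof.
move=> fD f'D fmax; rewrite leNgt; apply/negP => f''pos.
have f'c := derive1_eq0_at_local_max fD fmax.
have : \forall t \near c, derivable f t 1 /\ f t <= f c.
  by near=> t; split; near: t.
move=> /nbhs_ballP[d /= d0 Hd].
rewrite derive1E in f''pos; have := @cvgr_gt _ _ _ (dnbhs_filter 0) _ _ f'D _ f''pos.
rewrite /dnbhs /within /= => /nbhs_ballP[e /= e0 He].
have f'pos t : c < t -> t < c + e -> 0 < derive1 f t.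
  move=> ct tce; have := He (t - c); rewrite /ball /= sub0r normrN.
  rewrite gtr0_norm ?subr_gt0 // ltrBlDl gt_eqF ?subr_gt0 // => /(_ tce isT).
  by rewrite f'c subr0 [_%:A]mulr1 subrK /GRing.scale /= pmulr_rgt0 // invr_gt0 subr_gt0.
set h := Num.min d e / 2.
have md : Num.min d e <= d by rewrite ge_min lexx.
have me : Num.min d e <= e by rewrite ge_min lexx orbT.
have hd : h < d by rewrite /h; lra.
have he : h < e by rewrite /h; lra.
have h0 : 0 < h by rewrite divr_gt0 // lt_min d0 e0.
have inball t : c <= t <= c + h -> ball c d t.
  by rewrite /ball /= ltr_distlC => /andP[? ?]; apply/andP; split; lra.
have : f c < f (c + h).
  apply: (@gtr0_derive1_lt_cc _ f c (c + h)).
  - by move=> t; rewrite in_itv /= => /andP[? ?]; apply: (Hd t (inball t _)).1; lra.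
  - by move=> t; rewrite in_itv /= => /andP[? ?]; apply: f'pos; lra.
  - by apply: derivable_within_continuous => t; rewrite in_itv /= => /inball /Hd [].
  - by rewrite in_itv /= lexx ler_wpDr // ltW.
  - by rewrite in_itv /= lexx ler_wpDr // ltW.
  - by lra.
have := (Hd (c + h) (inball _ _)).2; lra.
Unshelve. all: by end_near. Qed.

End SecondDerivativeTest.

Section QuotientRule.
Variable R : realType.
Implicit Types (f g : R -> R) (c : R).

Lemma derive1_div f g c : derivable f c 1 -> derivable g c 1 -> g c != 0 ->
  derive1 (fun s => f s / g s) c = (derive1 f c * g c - f c * derive1 g c) / g c ^+ 2.
Proof.
move=> /derivableP fD /derivableP gD gc0.
have -> : (fun s => f s / g s) = f * (fun s => (g s)^-1) by [].
rewrite derive1E; have [_ ->] := is_deriveM fD (is_deriveV gc0 gD).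
by rewrite !derive1E /GRing.scale /=; field.
Qed.

Lemma is_derive_derive1_div_at_critical f g c :
  (\forall t \near c, [/\ derivable f t 1, derivable g t 1 & g t != 0]) ->
  derivable (derive1 f) c 1 -> derivable (derive1 g) c 1 ->
  derive1 (fun s => f s / g s) c = 0 ->
  is_derive c 1 (derive1 (fun s => f s / g s))
    ((g c * derive1 (derive1 f) c - f c * derive1 (derive1 g) c) / g c ^+ 2).
Proof.
move=> fgD f'D g'D crit.
have [fD gD gc0] : [/\ derivable f c 1, derivable g c 1 & g c != 0].
  exact: nbhs_singleton fgD.
pose W := derive1 f * g - f * derive1 g.
have qE : \forall t \near c, W t * (g t ^+ 2)^-1 = derive1 (fun s => f s / g s) t.
  by near=> t; have [? ? ?] : [/\ derivable f t 1, derivable g t 1 & g t != 0];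
    [near: t | rewrite derive1_div].
have W0 : W c = 0.
  move: crit; rewrite derive1_div // => /eqP.
  by rewrite mulf_eq0 invr_eq0 sqrf_eq0 (negbTE gc0) orbF => /eqP.
have WD : is_derive c 1 W (g c * derive1 (derive1 f) c - f c * derive1 (derive1 g) c).
  apply: is_derive_eq (is_deriveB (is_deriveM (derivableP f'D) (derivableP gD))
                                  (is_deriveM (derivableP fD) (derivableP g'D))) _.
  by rewrite !derive1E /GRing.scale /=; ring.
have g2c : (g ^+ 2) c != 0 by rewrite exprfctE expf_neq0.
have g2D := is_deriveV g2c (is_deriveX 2 (derivableP gD)).
apply: near_eq_is_derive qE (is_derive_eq (is_deriveM WD g2D) _).
by rewrite W0 /GRing.scale /= mul0r add0r mulrC.
Unshelve. all: by end_near. Qed.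

End QuotientRule.

Definition radii (R : realType) (r0 : R) (R0 : \bar R) : set R :=
  [set t | r0 < t /\ (t%:E < R0)%E].

Section Radii.
Variables (R : realType) (r0 : R) (R0 : \bar R).

Lemma cvg_radii {T : Type} {F : set_system T} {FF : Filter F} (h : T -> R) l :
  h @ F --> l -> radii r0 R0 l -> \forall t \near F, radii r0 R0 (h t).
Proof.
move=> hl [r0l lR0]; have r0h := cvgr_gt _ hl _ r0l.
case: R0 lR0 => [r||] //= lr; last by near=> t; split; [near: t; exact: r0h | exact: ltry].
rewrite lte_fin in lr; have hr := cvgr_lt _ hl _ lr.
by near=> t; split; [near: t; exact: r0h | rewrite lte_fin; near: t; exact: hr].
Unshelve. all: by end_near. Qed.

Lemma radii_gt0 t : 0 < r0 -> radii r0 R0 t -> 0 < t.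
Proof. by move=> r0_gt0 [r0t _]; exact: lt_trans r0t. Qed.

Lemma near_radii t : radii r0 R0 t -> \forall s \near t, radii r0 R0 s.
Proof. exact: (cvg_radii (@cvg_id _ _)). Qed.

End Radii.

Section EuclideanNorm.
Variables (R : realType) (n : nat).
Local Notation pt := 'rV[R]_n.+1.
Local Notation e0 := (evec R (ord0 : 'I_n.+1)).

Definition sqnorm (y : pt) : R := \sum_(i < n.+1) y ord0 i ^+ 2.

Lemma sqnorm_ge0 (y : pt) : 0 <= sqnorm y.
Proof. by apply: sumr_ge0 => i _; exact: sqr_ge0. Qed.

Lemma enorm_sqr (y : pt) : enorm y ^+ 2 = sqnorm y.
Proof. by rewrite sqr_sqrtr // sqnorm_ge0. Qed.

Lemma sqnormZ c (y : pt) : sqnorm (c *: y) = c ^+ 2 * sqnorm y.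
Proof. by rewrite /sqnorm mulr_sumr; apply: eq_bigr => i _; rewrite mxE exprMn. Qed.

Lemma enormZ c (y : pt) : enorm (c *: y) = `|c| * enorm y.
Proof. by rewrite /enorm -/(sqnorm _) sqnormZ sqrtrM ?sqr_ge0 // sqrtr_sqr. Qed.

Lemma sqnorm_line (y : pt) i s :
  sqnorm (s *: evec R i + y) = sqnorm y + 2 * s * y ord0 i + s ^+ 2.
Proof.
rewrite /sqnorm (bigD1 i) //= [in RHS](bigD1 i) //= !mxE !eqxx mulr1.
rewrite (eq_bigr (fun j => y ord0 j ^+ 2)); first by ring.
by move=> j /negbTE ji; rewrite !mxE ji mulr0 add0r.
Qed.

Lemma enorm_axis t : enorm (t *: e0) = `|t|.
Proof.
rewrite -[t *: e0]addr0 /enorm -/(sqnorm _) sqnorm_line /sqnorm big1 => [|i _].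
  by rewrite mxE mulr0 !add0r sqrtr_sqr.
by rewrite mxE expr0n.
Qed.

Lemma is_derive_enorm_line (y : pt) i : 0 < enorm y ->
  is_derive (0 : R) 1 (fun s => enorm (s *: evec R i + y)) (y ord0 i / enorm y).
Proof.
move=> y0; pose P : {poly R} := (sqnorm y)%:P + (2 * y ord0 i) *: 'X + 'X^2.
have -> : (fun s => enorm (s *: evec R i + y)) = Num.sqrt \o horner P.
  apply/funext => s /=; rewrite /enorm -/(sqnorm _) sqnorm_line /P !hornerE.
  by congr Num.sqrt; ring.
have P0 : P.[0] = sqnorm y by rewrite /P !hornerE; ring.
have P'0 : (deriv P).[0] = 2 * y ord0 i.
  by rewrite /P !(derivD, derivZ, derivC, derivXn, derivX) !hornerE /= !addr0.
have P0pos : 0 < P.[0] by rewrite P0 -enorm_sqr exprn_gt0.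
apply: is_derive_eq (is_derive1_comp (is_derive1_sqrt P0pos) (is_derive_poly P 0)) _.
by rewrite P'0 P0 -enorm_sqr sqrtr_sqr gtr0_norm //; field; rewrite gt_eqF.
Qed.

Lemma cvg_enorm_line (y : pt) i : 0 < enorm y ->
  (fun s => enorm (s *: evec R i + y)) @ (0 : R) --> enorm y.
Proof.
move=> /(is_derive_enorm_line i) [/derivable1_diffP /differentiable_continuous].
by rewrite /prop_for /continuous_at /= scale0r add0r.
Qed.

End EuclideanNorm.

Definition radial_Lop (R : realType) (n : nat) (p V0 r a da d2a : R) : R :=
  - ((p - 1) * `|da| `^ (p - 2) * d2a + (ppow p da / r) *+ n) - V0 * a `^ (p - 2) * a.

Section RadialComparison.
Variables (R : realType) (n : nat) (p V0 r : R).
Hypothesis p_gt1 : 1 < p.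

Lemma radial_Lop_proportional a k d2a : 0 < a ->
  radial_Lop n p V0 r a (k * a) d2a
  = a `^ (p - 2) * (- ((p - 1) * `|k| `^ (p - 2)) * d2a
                    - (`|k| `^ (p - 2) * k / r *+ n + V0) * a).
Proof.
move=> a_gt0; rewrite /radial_Lop normrM (gtr0_norm a_gt0) (powRM _ (normr_ge0 k) (ltW a_gt0)).
by rewrite ppowM ?ltW // /ppow; ring.
Qed.

Lemma radial_Lop_comparison a b k d2a d2b : 0 < a -> 0 < b -> k != 0 ->
  radial_Lop n p V0 r a (k * a) d2a <= 0 -> 0 <= radial_Lop n p V0 r b (k * b) d2b ->
  radial_Lop n p V0 r a (k * a) d2a < 0 \/ 0 < radial_Lop n p V0 r b (k * b) d2b ->
  0 < b * d2a - a * d2b.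
Proof.
move=> a_gt0 b_gt0 k_neq0; rewrite !radial_Lop_proportional //.
set K := (p - 1) * _; set c := _ + V0.
set X := - K * d2a - c * a; set Y := - K * d2b - c * b.
rewrite pmulr_rle0 ?pmulr_rge0 ?pmulr_rlt0 ?pmulr_rgt0 ?powR_gt0 // => X_le0 Y_ge0 XY.
have K_gt0 : 0 < K by rewrite mulr_gt0 ?subr_gt0 // powR_gt0 // normr_gt0.
have bX : b * X <= 0 by rewrite pmulr_rle0.
have aY : 0 <= a * Y by rewrite pmulr_rge0.
have bXaY : b * X - a * Y < 0.
  case: XY => [X_lt0 | Y_gt0].
  - have : b * X < 0 by rewrite pmulr_rlt0.
    lra.
  - have : 0 < a * Y by rewrite pmulr_rgt0.
    lra.
have XY_eq : b * X - a * Y = - (K * (b * d2a - a * d2b)) by rewrite /X /Y; ring.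
by rewrite XY_eq oppr_lt0 pmulr_rgt0 in bXaY.
Qed.

End RadialComparison.

Definition flux (R : realType) (N : nat) (p : R) (w : 'rV[R]_N -> R) (i : 'I_N)
    (y : 'rV[R]_N) : R :=
  gradnorm w y `^ (p - 2) * partial i w y.

Section RadialFunction.
Variables (R : realType) (n : nat) (r0 : R) (R0 : \bar R).
Variables (w : 'rV[R]_n.+1 -> R) (phi : R -> R).
Local Notation e0 := (evec R (ord0 : 'I_n.+1)).
Local Notation Omega := (annulus_open r0 R0).
Implicit Types x y : 'rV[R]_n.+1.
Hypothesis r0_gt0 : 0 < r0.
Hypothesis w_radial : radial_on (annulus r0 R0) w phi.

Lemma enorm_gt0_annulus y : Omega y -> 0 < enorm y.
Proof. exact: radii_gt0 r0_gt0. Qed.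

Lemma axis_in_annulus r : radii r0 R0 r -> Omega (r *: e0).
Proof.
move=> rr; rewrite /annulus_open /mkset enorm_axis gtr0_norm //.
exact: radii_gt0 r0_gt0 rr.
Qed.

Lemma near_line_annulus y i : Omega y ->
  \forall s \near (0 : R), Omega (s *: evec R i + y).
Proof. by move=> yA; exact: cvg_radii (cvg_enorm_line i (enorm_gt0_annulus yA)) yA. Qed.

Lemma radial_eq y : Omega y -> w y = phi (enorm y).
Proof. by case=> r0y yR0; apply: w_radial; split => //; exact: ltW. Qed.

Lemma radial_axis r : radii r0 R0 r -> phi r = w (r *: e0).
Proof.
move=> rr; rewrite radial_eq; last exact: axis_in_annulus.
by rewrite enorm_axis (gtr0_norm (radii_gt0 r0_gt0 rr)).
Qed.

Lemma profile_gt0 r : positive_on (annulus r0 R0) w -> radii r0 R0 r -> 0 < phi r.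
Proof.
move=> w_gt0 rr; rewrite radial_axis //; apply: w_gt0.
by case: (axis_in_annulus rr) => ? ?; split => //; exact: ltW.
Qed.

Lemma cvg_ray x : 0 < enorm x -> (fun t => (t / enorm x) *: x) @ enorm x --> x.
Proof.
move=> x_gt0.
have : (fun t => (t / enorm x) *: x) @ enorm x --> (enorm x / enorm x) *: x.
  by apply: cvgZ; [apply: cvgM; [exact: cvg_id | exact: cvg_cst] | exact: cvg_cst].
by rewrite divff ?gt_eqF // scale1r.
Qed.

Lemma radial_along_ray x : Omega x ->
  \forall t \near enorm x, w ((t / enorm x) *: x) = phi t.
Proof.
move=> xA; have x_gt0 := enorm_gt0_annulus xA.
near=> t; have tr : radii r0 R0 t by near: t; exact: near_radii.
have t_gt0 := radii_gt0 r0_gt0 tr.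
have tx : enorm ((t / enorm x) *: x) = t.
  by rewrite enormZ gtr0_norm ?divr_gt0 // divfK // gt_eqF.
have tA : Omega ((t / enorm x) *: x) by rewrite /annulus_open /mkset tx.
by rewrite radial_eq // tx.
Unshelve. all: by end_near. Qed.

Hypothesis w_diff : forall x, Omega x -> differentiable w x.

Lemma is_derive_profile r : radii r0 R0 r -> is_derive r 1 phi (partial ord0 w (r *: e0)).
Proof.
move=> rr; have /is_derive_rayP :=
  derivableP (diff_derivable (v := e0) (w_diff (axis_in_annulus rr))).
apply: near_eq_is_derive; near=> s; rewrite radial_axis //.
by near: s; exact: near_radii.
Unshelve. all: by end_near. Qed.

Lemma derivable_profile r : radii r0 R0 r -> derivable phi r 1.
Proof. by case/is_derive_profile. Qed.

Lemma derive1_profile r : radii r0 R0 r -> derive1 phi r = partial ord0 w (r *: e0).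
Proof. by move=> /is_derive_profile [_]; rewrite derive1E. Qed.

Lemma is_derive_radial y i : Omega y ->
  is_derive y (evec R i) w (derive1 phi (enorm y) * (y ord0 i / enorm y)).
Proof.
move=> yA; rewrite -[y]add0r -[0 : 'rV_n.+1](scale0r (evec R i)) -is_derive_lineP.
apply: (near_eq_is_derive (f := phi \o (fun s => enorm (s *: evec R i + y)))).
  by near=> s; rewrite /= radial_eq //; near: s; exact: near_line_annulus.
rewrite scale0r add0r; apply: is_derive1_comp; last first.
  exact: is_derive_enorm_line (enorm_gt0_annulus yA).
by rewrite scale0r add0r derive1E; apply: derivableP; exact: derivable_profile.
Unshelve. all: by end_near. Qed.

Lemma partial_radial y i : Omega y ->
  partial i w y = derive1 phi (enorm y) * (y ord0 i / enorm y).
Proof. by move=> /(is_derive_radial i) [_]. Qed.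

Lemma gradnorm_radial y : Omega y -> gradnorm w y = `|derive1 phi (enorm y)|.
Proof.
move=> yA; rewrite /gradnorm.
under eq_bigr => i _ do rewrite partial_radial //.
have y0 : enorm y != 0 by rewrite gt_eqF // enorm_gt0_annulus.
rewrite (_ : \sum_i _ = (derive1 phi (enorm y) / enorm y) ^+ 2 * enorm y ^+ 2).
  by rewrite -exprMn divfK // sqrtr_sqr.
by rewrite enorm_sqr /sqnorm mulr_sumr; apply: eq_bigr => i _; field.
Qed.

Variable p : R.

Lemma flux_radial y i : Omega y ->
  flux p w i y = ppow p (derive1 phi (enorm y)) * (y ord0 i / enorm y).
Proof. by move=> yA; rewrite /flux gradnorm_radial // partial_radial // /ppow !mulrA. Qed.

Hypothesis w'_diff : forall x, Omega x -> differentiable (partial ord0 w) x.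
Hypothesis phi'_neq0 : forall r, radii r0 R0 r -> derive1 phi r != 0.

Lemma derivable_profile_derive1 r : radii r0 R0 r -> derivable (derive1 phi) r 1.
Proof.
move=> rr; have /is_derive_rayP D :=
  derivableP (diff_derivable (v := e0) (w'_diff (axis_in_annulus rr))).
suff /near_eq_is_derive /(_ D) [] :
  \forall s \near r, partial ord0 w (s *: e0) = derive1 phi s by [].
by near=> s; rewrite derive1_profile //; near: s; exact: near_radii.
Unshelve. all: by end_near. Qed.

Lemma is_derive_ppow_profile r : radii r0 R0 r ->
  is_derive r 1 (fun s => ppow p (derive1 phi s))
    ((p - 1) * `|derive1 phi r| `^ (p - 2) * derive1 (derive1 phi) r).
Proof.
move=> rr; have D2 := derivableP (derivable_profile_derive1 rr).
apply: is_derive_eq (is_derive1_comp (is_derive_ppow p (phi'_neq0 rr)) D2) _.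
by rewrite [derive1 (derive1 phi) r]derive1E.
Qed.

Lemma partial_flux_axis r : radii r0 R0 r ->
  partial ord0 (flux p w ord0) (r *: e0)
  = (p - 1) * `|derive1 phi r| `^ (p - 2) * derive1 (derive1 phi) r.
Proof.
move=> rr; apply: derive_val; apply/is_derive_rayP.
apply: near_eq_is_derive (is_derive_ppow_profile rr).
near=> s; have ss : radii r0 R0 s by near: s; exact: near_radii.
have s_gt0 := radii_gt0 r0_gt0 ss.
rewrite flux_radial; last exact: axis_in_annulus.
rewrite enorm_axis gtr0_norm //.
by rewrite mxE /evec mxE !eqxx mulr1 divff ?mulr1 // gt_eqF.
Unshelve. all: by end_near. Qed.

Lemma partial_flux_transverse r (j : 'I_n) : radii r0 R0 r ->
  partial (lift ord0 j) (flux p w (lift ord0 j)) (r *: e0) = ppow p (derive1 phi r) / r.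
Proof.
move=> rr; apply: derive_val.
set i := lift ord0 j.
have r_gt0 := radii_gt0 r0_gt0 rr.
have rA := axis_in_annulus rr.
pose N s := enorm (s *: evec R i + r *: e0).
have N0 : N 0 = r by rewrite /N scale0r add0r enorm_axis gtr0_norm.
pose G s := ppow p (derive1 phi s).
pose H s := G (N s) / N s.
have HC : H @ (0 : R) --> H 0.
  have NC : N @ (0 : R) --> N 0.
    rewrite N0; have := cvg_enorm_line i (enorm_gt0_annulus rA).
    by rewrite enorm_axis gtr0_norm.
  have GC : G @ N 0 --> G (N 0).
    rewrite N0; apply: differentiable_continuous; apply/derivable1_diffP.
    by case: (is_derive_ppow_profile rr).
  by apply: cvgM; [exact: cvg_comp NC GC | apply: cvgV NC; rewrite N0 gt_eqF].
(* Along [e_i] the flux is [s * H s] with [H] continuous at [0]. *)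
have := is_derive_id_mul HC; rewrite /H N0 -[r *: e0]add0r -(scale0r (evec R i)).
rewrite -is_derive_lineP; apply: near_eq_is_derive.
near=> s; have sA : Omega (s *: evec R i + r *: e0) by near: s; exact: near_line_annulus.
rewrite flux_radial // /H /N mulrCA; congr (_ * (_ / _)).
by rewrite !mxE !eqxx /i eq_sym (negbTE (neq_lift _ _)) /= mulr1 mulr0 addr0.
Unshelve. all: by end_near. Qed.

Lemma plap_radial r : radii r0 R0 r ->
  plap p w (r *: e0) = (p - 1) * `|derive1 phi r| `^ (p - 2) * derive1 (derive1 phi) r
                       + (ppow p (derive1 phi r) / r) *+ n.
Proof.
move=> rr; rewrite /plap big_ord_recl -/(flux p w ord0) partial_flux_axis //.
under eq_bigr => j _ do rewrite -/(flux p w _) partial_flux_transverse //.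
by rewrite sumr_const card_ord.
Qed.

Lemma Lop_radial (V : 'rV[R]_n.+1 -> R) r : radii r0 R0 r -> 0 < phi r ->
  Lop p V w (r *: e0)
  = radial_Lop n p (V (r *: e0)) r (phi r) (derive1 phi r) (derive1 (derive1 phi) r).
Proof.
by move=> rr phi_gt0; rewrite /Lop plap_radial // -(radial_axis rr) (gtr0_norm phi_gt0).
Qed.

End RadialFunction.

Lemma C2_on_differentiable (R : realType) (N : nat) (O A : set 'rV[R]_N) w :
  C2_on O A w -> forall x, O x -> differentiable w x.
Proof. by case=> w_diff _ x /w_diff []. Qed.

Lemma C2_on_differentiable_partial (R : realType) (N : nat) (O A : set 'rV[R]_N) w i :
  C2_on O A w -> forall x, O x -> differentiable (partial i w) x.
Proof. by case=> w_diff _ x /w_diff [_]. Qed.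

Lemma strictly_monotone_radial_derive1_neq0 (R : realType) (r0 : R) (R0 : \bar R) phi :
  strictly_monotone_radial r0 R0 phi -> forall r, radii r0 R0 r -> derive1 phi r != 0.
Proof.
by case=> -[phi'_sgn _] r [r0r rR0]; [rewrite gt_eqF | rewrite lt_eqF]; rewrite ?phi'_sgn.
Qed.

Section RatioOfRadialSolutions.
Variables (R : realType) (n : nat) (p r0 : R) (R0 : \bar R).
Variables (V u v : 'rV[R]_n.+1 -> R) (phiu phiv : R -> R).
Local Notation e0 := (evec R (ord0 : 'I_n.+1)).
Local Notation Omega := (annulus_open r0 R0).
Hypotheses (p_gt1 : 1 < p) (r0_gt0 : 0 < r0).
Hypotheses (u_radial : radial_on (annulus r0 R0) u phiu)
  (u_gt0 : positive_on (annulus r0 R0) u)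
  (u_C2 : C2_on Omega (annulus r0 R0) u)
  (u_mono : strictly_monotone_radial r0 R0 phiu)
  (u_sub : subsolution p V Omega u).
Hypotheses (v_radial : radial_on (annulus r0 R0) v phiv)
  (v_gt0 : positive_on (annulus r0 R0) v)
  (v_C2 : C2_on Omega (annulus r0 R0) v)
  (v_mono : strictly_monotone_radial r0 R0 phiv)
  (v_super : supersolution p V Omega v).
Hypothesis strict : strict_subsolution p V Omega u \/ strict_supersolution p V Omega v.

Local Notation q := (fun r => phiu r / phiv r).

Let u_diff := C2_on_differentiable u_C2.
Let v_diff := C2_on_differentiable v_C2.
Let u'_diff := C2_on_differentiable_partial ord0 u_C2.
Let v'_diff := C2_on_differentiable_partial ord0 v_C2.
Let phiu'_neq0 := strictly_monotone_radial_derive1_neq0 u_mono.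
Let phiv'_neq0 := strictly_monotone_radial_derive1_neq0 v_mono.

Lemma ratio_regular r : radii r0 R0 r ->
  \forall t \near r, [/\ derivable phiu t 1, derivable phiv t 1 & phiv t != 0].
Proof.
move=> rr; near=> t; have tr : radii r0 R0 t by near: t; exact: near_radii.
split; [exact (derivable_profile r0_gt0 u_radial u_diff tr)
       | exact (derivable_profile r0_gt0 v_radial v_diff tr)
       | by rewrite gt_eqF // (profile_gt0 r0_gt0 v_radial v_gt0 tr)].
Unshelve. all: by end_near. Qed.

Lemma is_derive_derive1_ratio r : radii r0 R0 r -> derive1 q r = 0 ->
  is_derive r 1 (derive1 q)
    ((phiv r * derive1 (derive1 phiu) r - phiu r * derive1 (derive1 phiv) r) / phiv r ^+ 2).
Proof.
move=> rr; apply: is_derive_derive1_div_at_critical (ratio_regular rr) _ _.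
- exact (derivable_profile_derive1 r0_gt0 u_radial u_diff u'_diff rr).
- exact (derivable_profile_derive1 r0_gt0 v_radial v_diff v'_diff rr).
Qed.

Lemma derive2_ratio_gt0 r : radii r0 R0 r -> derive1 q r = 0 -> 0 < derive1 (derive1 q) r.
Proof.
move=> rr crit; rewrite derive1E; have [_ ->] := is_derive_derive1_ratio rr crit.
have a_gt0 := profile_gt0 r0_gt0 u_radial u_gt0 rr.
have b_gt0 := profile_gt0 r0_gt0 v_radial v_gt0 rr.
rewrite divr_gt0 ?exprn_gt0 //.
have [uD vD _] := nbhs_singleton (ratio_regular rr).
set k := derive1 phiu r / phiu r.
have k_neq0 : k != 0 by rewrite mulf_neq0 ?phiu'_neq0 // invr_eq0 gt_eqF.
have phiu'E : derive1 phiu r = k * phiu r by rewrite divfK ?gt_eqF.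
have phiv'E : derive1 phiv r = k * phiv r.
  move: crit; rewrite derive1_div ?gt_eqF // => /eqP.
  rewrite mulf_eq0 invr_eq0 expf_eq0 /= (gt_eqF b_gt0) orbF subr_eq0 => /eqP cross.
  by rewrite /k mulrAC cross mulrC mulKf // gt_eqF.
have rA : Omega (r *: e0) by exact: axis_in_annulus.
have Lu := Lop_radial r0_gt0 u_radial u_diff p u'_diff phiu'_neq0 V rr a_gt0.
have Lv := Lop_radial r0_gt0 v_radial v_diff p v'_diff phiv'_neq0 V rr b_gt0.
rewrite phiu'E in Lu; rewrite phiv'E in Lv.
apply: (radial_Lop_comparison (n := n) (V0 := V (r *: e0)) (r := r) p_gt1 a_gt0 b_gt0 k_neq0);
  rewrite -?Lu -?Lv.
- exact: u_sub.
- exact: v_super.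
- by case: strict => S; [left | right]; exact: S.
Qed.

Lemma ratio_local_max x : Omega x ->
  (\forall y \near x, u y / v y <= u x / v x) ->
  \forall t \near enorm x, q t <= q (enorm x).
Proof.
move=> xA xmax; have ray := cvg_ray (enorm_gt0_annulus r0_gt0 xA) xmax.
have u_ray := radial_along_ray r0_gt0 u_radial xA.
have v_ray := radial_along_ray r0_gt0 v_radial xA.
near=> t; rewrite -(near u_ray t) // -(near v_ray t) //.
rewrite -(radial_eq u_radial xA) -(radial_eq v_radial xA).
by near: t; exact: ray.
Unshelve. all: by end_near. Qed.

Lemma ratio_no_local_max :
  ~ exists x, Omega x /\ \forall y \near x, u y / v y <= u x / v x.
Proof.
case=> x [xA /(ratio_local_max xA) qmax].
have xr : radii r0 R0 (enorm x) := xA.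
have qD : \forall t \near enorm x, derivable q t 1.
  apply: filterS (ratio_regular xr) => t [uD vD vt0].
  exact: derivableM uD (derivableV vt0 vD).
have crit := derive1_eq0_at_local_max qD qmax.
have [q'D _] := is_derive_derive1_ratio xr crit.
by have := derive2_le0_at_local_max qD q'D qmax; rewrite leNgt derive2_ratio_gt0.
Qed.

End RatioOfRadialSolutions.

Theorem lemma3p3 (R : realType) (N : nat) (p r0 : R) (R0 : \bar R)
    (V u v : 'rV[R]_N -> R) (phiu phiv : R -> R) :
  (2 <= N)%N -> 1 < p -> 0 < r0 -> (r0%:E < R0)%E ->
  {within annulus_open r0 R0, continuous V} ->
  radial_on (annulus r0 R0) u phiu ->
  positive_on (annulus r0 R0) u ->
  C2_on (annulus_open r0 R0) (annulus r0 R0) u ->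
  strictly_monotone_radial r0 R0 phiu ->
  subsolution p V (annulus_open r0 R0) u ->
  radial_on (annulus r0 R0) v phiv ->
  positive_on (annulus r0 R0) v ->
  C2_on (annulus_open r0 R0) (annulus r0 R0) v ->
  strictly_monotone_radial r0 R0 phiv ->
  supersolution p V (annulus_open r0 R0) v ->
  strict_subsolution p V (annulus_open r0 R0) u \/
  strict_supersolution p V (annulus_open r0 R0) v ->
  (forall rho : R, r0 < rho -> (rho%:E < R0)%E ->
     derive1 (fun r => phiu r / phiv r) rho = 0 ->
     0 < derive1 (derive1 (fun r => phiu r / phiv r)) rho)
  /\
  ~ (exists x : 'rV[R]_N, annulus_open r0 R0 x /\
       \forall y \near x, u y / v y <= u x / v x).
Proof.
case: N V u v => [//|n] V u v _ p_gt1 r0_gt0 _ _ u_radial u_gt0 u_C2 u_mono u_sub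
  v_radial v_gt0 v_C2 v_mono v_super strict.
split.
- move=> rho r0rho rhoR0.
  exact: (derive2_ratio_gt0 p_gt1 r0_gt0 u_radial u_gt0 u_C2 u_mono u_sub
    v_radial v_gt0 v_C2 v_mono v_super strict (conj r0rho rhoR0)).
- exact: (ratio_no_local_max p_gt1 r0_gt0 u_radial u_gt0 u_C2 u_mono u_sub
    v_radial v_gt0 v_C2 v_mono v_super strict).
Qed.
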